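(* Let $d\ge1$ and let $X_1,\dots,X_d$ be random variables with $X_i\sim\mathrm{Bernoulli}(p_i)$ satisfying $\mathbb{E}[X_iX_j]\le p_ip_j$ for all $i\neq j$. Let $\tilde X_1,\dots,\tilde X_d$ be mutually independent with $\tilde X_i$ equal in distribution to $X_i$, and set $Z=\sum_{i=1}^dX_i$, $\tilde Z=\sum_{i=1}^d\tilde X_i$. Then $\mathbb{P}(Z>0)\ge\frac12\mathbb{P}(\tilde Z>0)$. *)

From HB Require Import structures.
From mathcomp Require Import all_boot all_order all_algebra.
From mathcomp Require Import all_classical all_reals all_analysis.
Set Implicit Arguments. Unset Strict Implicit. Unset Printing Implicit Defensive.
Import Order.TTheory GRing.Theory Num.Theory.
Local Open Scope classical_set_scope.
Local Open Scope ring_scope.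

Definition mutually_independent (dT : measure_display) (T : measurableType dT)
    (R : realType) (P : probability T R) (n : nat) (X : 'I_n -> {RV P >-> R}) :=
  forall (J : {set 'I_n}) (B : 'I_n -> set R),
    (forall i, measurable (B i)) ->
    P (\bigcap_(i in [set i | i \in J]) (X i @^-1` B i)) =
    (\prod_(i in J) P (X i @^-1` B i))%E.

From HB Require Import structures.
From mathcomp Require Import all_boot all_order all_algebra.
From mathcomp Require Import all_classical all_reals all_analysis.
From mathcomp Require Import ring lra.
From mathcomp Require Import measurable_realfun.
Set Implicit Arguments. Unset Strict Implicit. Unset Printing Implicit Defensive.
Import Order.TTheory GRing.Theory Num.Theory.
Local Open Scope classical_set_scope.
Local Open Scope ring_scope.

(* Let A_i = {X_i = 1}, U the union of the A_i, S = sum_i 1_{A_i},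
   mu = sum_i p_i and a = 1 + mu. Almost surely X_i = 1_{A_i}, hence
   E[X_i X_j] = P(A_i /\ A_j) and {Z > 0} contains U up to a null set.
   Pointwise 2 a S <= a^2 1_U + S^2 (S vanishes off U); integrating and using
   E[S^2] = sum_{i,j} P(A_i /\ A_j) <= mu^2 + mu = a mu gives the
   Chung-Erdos type bound mu <= (1 + mu) P(U). On the other side the union
   bound gives P(Zt > 0) <= min(1, mu), and min(1, mu) <= 2 mu / (1 + mu). *)

Lemma bigsetU_ordP (T : Type) n (F : 'I_n -> set T) w :
  (\big[setU/set0]_(i < n) F i) w <-> exists i, F i w.
Proof.
rewrite -bigcup_seq; split=> [[i _ Fiw]|[i Fiw]]; first by exists i.
by exists i => //=; rewrite mem_index_enum.
Qed.

Section measure_lemmas.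
Context d (T : measurableType d) (R : realType).

Lemma le_measure_bigsetU (mu : {measure set T -> \bar R}) n
    (F : 'I_n -> set T) :
  (forall i, measurable (F i)) ->
  (mu (\big[setU/set0]_(i < n) F i) <= \sum_(i < n) mu (F i))%E.
Proof.
move=> mF; elim: (index_enum _) => [|i s IH].
  by rewrite !big_nil measure0.
rewrite !big_cons; apply: le_trans (measureU2 mu (mF i) _) (leeD2l _ IH).
exact: bigsetU_measurable.
Qed.

Lemma le_measure_ae (mu : {measure set T -> \bar R}) (A B : set T) :
  measurable A -> measurable B -> {ae mu, forall w, A w -> B w} ->
  (mu A <= mu B)%E.
Proof.
move=> mA mB [N [mN muN0 ABN]].
rewrite -(measureU0 mB mN muN0).
apply: le_measure; rewrite ?inE; [exact: mA|exact: measurableU|].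
move=> w Aw; have [Bw|nBw] := pselect (B w); [by left|right].
by apply: ABN => /(_ Aw).
Qed.

Lemma measurable_sum_gt0 (I : finType) (f : I -> {mfun T >-> R}) :
  measurable [set w | 0 < \sum_(i : I) f i w].
Proof.
set g := fun w => \sum_(i : I) f i w.
have mg : measurable_fun setT g.
  by apply: measurable_sum => i; exact: measurable_funPT.
rewrite [X in measurable X](_ : _ = g @^-1` `]0, +oo[).
  by rewrite -[X in measurable X]setTI; apply: mg => //; exact: measurable_itv.
by apply/seteqP; split => w /=; rewrite in_itv /= andbT.
Qed.

Lemma le_measure_sum_gt0 (mu : {measure set T -> \bar R}) n
    (Y : 'I_n -> {mfun T >-> R}) :
  (mu [set w | (0 < \sum_(i < n) Y i w)%R] <=
   \sum_(i < n) mu (Y i @^-1` ~` [set 0%R]))%E.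
Proof.
have mY0 i : measurable (Y i @^-1` ~` [set 0]).
  exact/measurable_funPTI/measurableC.
apply: (le_trans _ (le_measure_bigsetU mu mY0)).
apply: le_measure; rewrite ?inE.
- exact: measurable_sum_gt0.
- exact: bigsetU_measurable.
move=> w /= Yw; apply/bigsetU_ordP; apply: contrapT => /forallNP Y0.
by move: Yw; rewrite big1 ?ltxx // => i _; exact: contrapT (Y0 i).
Qed.

End measure_lemmas.

Lemma integral_sum_indic d (T : measurableType d) (R : realType)
    (mu : {measure set T -> \bar R}) (I : Type) (s : seq I) (B : I -> set T) :
  (forall k, measurable (B k)) ->
  (\int[mu]_w (\sum_(k <- s) \1_(B k) w)%:E = \sum_(k <- s) mu (B k))%E.
Proof.
move=> mB; under eq_integral do rewrite -sumEFin.
rewrite ge0_integral_sum //.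
- by apply: eq_bigr => k _; rewrite integral_indic // setIT.
- by move=> k; apply/measurable_EFinP; exact: measurable_indic.
Qed.

Section union_lower_bound.
Context d (T : measurableType d) (R : realType) (P : probability T R).
Variables (n : nat) (A : 'I_n -> set T).
Hypothesis mA : forall i, measurable (A i).

Let U := \big[setU/set0]_(i < n) A i.
Let S w : R := \sum_(i < n) \1_(A i) w.

Let mS : measurable_fun setT S.
Proof. by apply: measurable_sum => i; exact: measurable_indic. Qed.

Lemma sqr_sum_indic w :
  S w ^+ 2 = \sum_(ij : 'I_n * 'I_n) \1_(A ij.1 `&` A ij.2) w.
Proof.
rewrite -(pair_bigA _ (fun i j => \1_(A i `&` A j) w)) expr2 mulr_suml.
apply: eq_bigr => i _; rewrite mulr_sumr; apply: eq_bigr => j _.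
by rewrite indicI.
Qed.

Lemma sum_indic_amgm (a : R) w : 0 <= a ->
  2 * a * S w <= a ^+ 2 * \1_U w + S w ^+ 2.
Proof.
move=> a0; have [Uw|nUw] := pselect (U w).
  by rewrite indicE mem_set // mulr1 -subr_ge0 (_ : _ - _ = (a - S w) ^+ 2);
    [exact: sqr_ge0 | ring].
have -> : S w = 0.
  rewrite /S big1 // => i _; rewrite indicE memNset // => Aiw.
  by apply: nUw; apply/bigsetU_ordP; exists i.
by rewrite mulr0 expr0n addr0 mulr_ge0 ?sqr_ge0.
Qed.

Lemma second_moment_bound (a : R) : 0 <= a ->
  ((2 * a)%:E * \sum_(i < n) P (A i) <=
   (a ^+ 2)%:E * P U + \sum_(i < n) \sum_(j < n) P (A i `&` A j))%E.
Proof.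
move=> a0; have mU : measurable U by exact: bigsetU_measurable.
have mAA (ij : 'I_n * 'I_n) : measurable (A ij.1 `&` A ij.2).
  exact: measurableI.
have S0 w : 0 <= S w by apply: sumr_ge0 => i _; rewrite indicE.
have mIU : measurable_fun setT (EFin \o (\1_U : T -> R)).
  by apply/measurable_EFinP; exact: measurable_indic.
have mS2 : measurable_fun setT (EFin \o (fun w => S w ^+ 2)).
  by apply/measurable_EFinP; exact: measurable_funX.
have int_S : (\int[P]_w (S w)%:E = \sum_(i < n) P (A i))%E.
  exact: integral_sum_indic.
have int_U : (\int[P]_w (\1_U w)%:E = P U)%E by rewrite integral_indic // setIT.
have int_S2 :
    (\int[P]_w (S w ^+ 2)%:E = \sum_(i < n) \sum_(j < n) P (A i `&` A j))%E.
  under eq_integral do rewrite sqr_sum_indic.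
  by rewrite integral_sum_indic // pair_bigA.
have mES : measurable_fun setT (EFin \o S) by exact/measurable_EFinP.
rewrite -int_S -int_U -int_S2 -!ge0_integralZl_EFin ?mulr_ge0 ?sqr_ge0 //;
  last by move=> w _; rewrite lee_fin.
rewrite -ge0_integralD //; last 3 first.
- by move=> w _; rewrite -EFinM lee_fin mulr_ge0 ?sqr_ge0 // indicE.
- exact: measurable_funeM.
- by move=> w _; rewrite lee_fin sqr_ge0.
apply: ge0_le_integral => //.
- by move=> w _; rewrite -EFinM lee_fin mulr_ge0 ?mulr_ge0.
- exact: measurable_funeM.
- by apply: emeasurable_funD => //; exact: measurable_funeM.
by move=> w _; rewrite -!EFinM -EFinD lee_fin sum_indic_amgm.
Qed.

Variable p : 'I_n -> R.
Hypothesis PA : forall i, P (A i) = (p i)%:E.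
Hypothesis PAA : forall i j, i != j -> (P (A i `&` A j) <= (p i * p j)%:E)%E.

Lemma sum_measure_setI_le :
  (\sum_(i < n) \sum_(j < n) P (A i `&` A j) <=
   ((\sum_(i < n) p i) ^+ 2 + \sum_(i < n) p i)%:E)%E.
Proof.
have p0 i : 0 <= p i by rewrite -lee_fin -PA.
have le_ij i j : (P (A i `&` A j) <= (p i * p j + (i == j)%:R * p i)%:E)%E.
  have [<-|ij] := eqVneq i j; last by rewrite mul0r addr0 PAA.
  by rewrite setIid PA mul1r lee_fin lerDr mulr_ge0.
apply: (@le_trans _ _
    (\sum_(i < n) \sum_(j < n) (p i * p j + (i == j)%:R * p i)%:E)%E).
  by apply: lee_sum => i _; apply: lee_sum => j _.
under eq_bigr do rewrite sumEFin.
rewrite sumEFin lee_fin expr2 mulr_suml -big_split /=; apply: ler_sum => i _.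
rewrite big_split /= -mulr_sumr lerD2l (bigD1 i) //= eqxx mul1r big1 ?addr0 //.
by move=> j ji; rewrite eq_sym (negPf ji) mul0r.
Qed.

Lemma union_lower_bound :
  ((\sum_(i < n) p i)%:E <= (1 + \sum_(i < n) p i)%:E * P U)%E.
Proof.
set mu := \sum_(i < n) p i.
have mu0 : 0 <= mu by apply: sumr_ge0 => i _; rewrite -lee_fin -PA.
have PU : P U = (fine (P U))%:E.
  by rewrite fineK // fin_num_measure //; exact: bigsetU_measurable.
have := le_trans (@second_moment_bound (1 + mu) (addr_ge0 ler01 mu0))
  (leeD2l _ sum_measure_setI_le).
rewrite (eq_bigr _ (fun i _ => PA i)) sumEFin PU -!EFinM -EFinD !lee_fin.
rewrite -/mu; move: (fine _) => u; nra.
Qed.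

End union_lower_bound.

Section bernoulli.
Context d (T : measurableType d) (R : realType) (P : probability T R).

Lemma bernoulli_ae_indic (X : {RV P >-> R}) (p : R) :
  P (X @^-1` [set 1]) = p%:E -> P (X @^-1` [set 0]) = (1 - p)%:E ->
  {ae P, forall w, X w = \1_(X @^-1` [set 1]) w}.
Proof.
move=> P1 P0; have m1 := measurable_funPTI X (measurable_set1 1).
have m0 := measurable_funPTI X (measurable_set1 0).
exists (~` (X @^-1` [set 1] `|` X @^-1` [set 0])); split.
- exact/measurableC/measurableU.
- rewrite probability_setC ?measureU //; last exact: measurableU.
    transitivity (1 - (p%:E + (1 - p)%:E))%E; first by rewrite -P1 -P0.
    by rewrite -EFinD addrC subrK subrr.
  by apply/seteqP; split => w //= [-> /eqP]; rewrite oner_eq0.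
move=> w /= + [X1|X0]; rewrite indicE; first by rewrite mem_set.
by rewrite memNset ?X0 //= X0 => /eqP; rewrite eq_sym oner_eq0.
Qed.

Lemma expectation_mul_ae_indic (X Y : {RV P >-> R}) :
  {ae P, forall w, X w = \1_(X @^-1` [set 1]) w} ->
  {ae P, forall w, Y w = \1_(Y @^-1` [set 1]) w} ->
  ('E_P[X \* Y])%E = P (X @^-1` [set 1] `&` Y @^-1` [set 1]).
Proof.
move=> X01 Y01.
have mXY := measurableI _ _ (measurable_funPTI X (measurable_set1 1))
  (measurable_funPTI Y (measurable_set1 1)).
rewrite unlock -[X in _ = P X]setIT -integral_indic //.
apply: ae_eq_integral => //.
- by apply/measurable_EFinP; apply: measurable_funM.
- by apply/measurable_EFinP; exact: measurable_indic.
by apply: filterS2 X01 Y01 => w Xw Yw _; rewrite /= Xw Yw indicI.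
Qed.

Lemma le_measure_bigsetU_sum_gt0 n (X : 'I_n -> {RV P >-> R}) :
  (forall i, {ae P, forall w, X i w = \1_(X i @^-1` [set 1]) w}) ->
  (P (\big[setU/set0]_(i < n) X i @^-1` [set 1%R]) <=
   P [set w | (0 < \sum_(i < n) X i w)%R])%E.
Proof.
move=> X01.
apply: le_measure_ae; [exact: bigsetU_measurable|exact: measurable_sum_gt0|].
have : {ae P, forall w i, X i w = \1_(X i @^-1` [set 1%R]) w}.
  exact: filter_forall.
apply: filterS => w X01w /bigsetU_ordP [i Xi1] /=.
rewrite (bigD1 i) //= [X i w]Xi1 ltr_pwDl //.
by apply: sumr_ge0 => j _; rewrite X01w indicE.
Qed.

End bernoulli.

Lemma half_le_of_le_min1 (R : realType) (mu : R) (q u : \bar R) :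
  0 <= mu -> (0 <= q <= 1)%E -> (q <= mu%:E)%E ->
  (mu%:E <= (1 + mu)%:E * u)%E -> ((2^-1)%:E * q <= u)%E.
Proof.
move=> mu0; case: q => [q| |] //=; rewrite !lee_fin => /andP[q0 q1] qmu.
case: u => [u| |]; rewrite ?leey //; last first.
  by rewrite mulrNy gtr0_sg ?mul1e ?leNye_eq // ltr_pwDl.
rewrite -EFinM !lee_fin => muu; nra.
Qed.

Theorem corollary11 (R : realType) (d : nat) (hd : (0 < d)%N)
  (dT : measure_display) (T : measurableType dT) (P : probability T R)
  (dT' : measure_display) (T' : measurableType dT') (Q : probability T' R)
  (p : 'I_d -> R) (X : 'I_d -> {RV P >-> R}) (Xt : 'I_d -> {RV Q >-> R}) :
  (* X i ~ Bernoulli (p i) *)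
  (forall i, P (X i @^-1` [set 1]) = (p i)%:E /\
             P (X i @^-1` [set 0]) = (1 - p i)%:E) ->
  (* E[X_i X_j] <= p_i p_j for i <> j *)
  (forall i j, i != j -> ('E_P[X i \* X j] <= (p i * p j)%:E)%E) ->
  (* Xt i has the same distribution as X i *)
  (forall i (A : set R), measurable A ->
     distribution Q (Xt i) A = distribution P (X i) A) ->
  (* the Xt i are mutually independent *)
  mutually_independent Xt ->
  ((2^-1)%:E * Q [set w | (0 < \sum_(i < d) Xt i w)%R] <=
     P [set w | (0 < \sum_(i < d) X i w)%R])%E.
Proof.
move=> hX hE hXt _.
pose A i := X i @^-1` [set 1].
have mA i : measurable (A i) by exact: measurable_funPTI.
have X01 i := bernoulli_ae_indic (hX i).1 (hX i).2.
have hA i j : i != j -> (P (A i `&` A j) <= (p i * p j)%:E)%E.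
  by move=> ij; rewrite -expectation_mul_ae_indic //; exact: hE.
have QXt i : Q (Xt i @^-1` ~` [set 0]) = (p i)%:E.
  rewrite -preimage_setC probability_setC; last exact: measurable_funPTI.
  have := hXt i _ (measurable_set1 0).
  rewrite /distribution /pushforward /= => ->.
  by rewrite (hX i).2 -EFinB opprB addrC subrK.
have mu0 : 0 <= \sum_(i < d) p i.
  by apply: sumr_ge0 => i _; rewrite -lee_fin -(hX i).1.
apply: (half_le_of_le_min1 mu0).
- by rewrite measure_ge0 probability_le1 //; exact: measurable_sum_gt0.
- rewrite -sumEFin (eq_bigr _ (fun i _ => esym (QXt i))).
  exact: le_measure_sum_gt0.
apply: le_trans (union_lower_bound mA (fun i => (hX i).1) hA) _.
apply: lee_wpmul2l; first by rewrite lee_fin addr_ge0.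
exact: le_measure_bigsetU_sum_gt0.
Qed.
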